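(* Let $\mathbb K$ be a field of characteristic $0$ and $N\ge2$. The image of the weight system $W^{\mathrm{St}}_{\mathfrak{so}_N}:\mathcal A(\downarrow\downarrow)_{\mathbb K}\to\mathrm{End}(\mathbb K^N)^{\otimes2}$ associated with $(\mathfrak{so}_N(\mathbb K),B_0,\mathrm{St})$ is a commutative subalgebra.
   Context: Jacobi diagrams on an oriented compact $1$-manifold $X$ span $\mathcal A(X)$ modulo AS, IHX, STU; $\mathcal A(X)_{\mathbb K}=\mathcal A(X)\otimes\mathbb K$; $\downarrow\downarrow$ is two downward oriented strands, and $\mathcal A(\downarrow\downarrow)$ is an algebra under stacking. For a metrized Lie algebra $(\mathfrak g,\langle\cdot,\cdot\rangle)$ over $\mathbb K$, the universal weight system $W_{\mathfrak g}:\mathcal A(\downarrow^{\otimes n})_{\mathbb K}\to U(\mathfrak g)^{\otimes n}$ is the algebra homomorphism obtained by putting on each edge the Casimir tensor $\Omega=\sum_av_a\otimes v^a$ (basis and dual basis w.r.t. the form), at each trivalent vertex $-\mathbf t$ where $\mathbf t\in\mathfrak g^{\otimes3}$ corresponds to $(x,y,z)\mapsto\langle[x,y],z\rangle$ (factors in cyclic order), contracting along edges and multiplying in $U(\mathfrak g)$ along each strand in its orientation order; for a representation $\rho:\mathfrak g\to\mathrm{End}(V)$, $W^\rho_{\mathfrak g}=U(\rho)^{\otimes n}\circ W_{\mathfrak g}$. $\mathfrak{so}_N(\mathbb K)$ is the Lie algebra of antisymmetric $N\times N$ matrices, $B_0(x,y)=\mathrm{tr}(xy)$ its trace form, and $\mathrm{St}$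 the standard representation on $\mathbb K^N$. *)

From HB Require Import structures.
From mathcomp Require Import all_boot all_order all_algebra.
From mathcomp Require Import all_fingroup mxtens.
Set Implicit Arguments. Unset Strict Implicit. Unset Printing Implicit Defensive.
Import GRing.Theory Num.Theory.
Local Open Scope ring_scope.

(* Jacobi diagrams on two downward oriented strands (generators of A(↓↓)).  *)
(* A diagram has n trivalent vertices, p univalent vertices on strand 1 and *)
(* q univalent vertices on strand 2 (listed in the orientation order of the *)
(* strand).  Half-edges:                                                    *)
(*   inl (i, k)       : k-th half-edge (k = 0,1,2, in the cyclic order of   *)
(*                      the vertex orientation) of trivalent vertex i,      *)
(*   inr (inl j)      : the half-edge at the j-th univalent vertex of       *)
(*                      strand 1,                                           *)
(*   inr (inr j)      : the half-edge at the j-th univalent vertex of       *)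
(*                      strand 2.                                           *)
(* Edges are given by a fixed-point free involution on half-edges.          *)

Definition half_edge (n p q : nat) : finType :=
  (('I_n * 'I_3) + ('I_p + 'I_q))%type.

Record jdiag := JDiag {
  jn : nat; jp : nat; jq : nat;
  jedge : {perm half_edge jn jp jq};
  jedge_ok : [forall h, (jedge (jedge h) == h) && (jedge h != h)]
}.

(* so_N(K): basis e_{ij} = E_ij - E_ji (i < j) of antisymmetric matrices;   *)
(* trace form B0(x,y) = tr(x y); the standard representation St is the      *)
(* inclusion so_N -> End(K^N) = 'M_N.                                        *)

Section SoN.
Variables (K : fieldType) (N : nat).

Definition so_idx : finType := {ij : 'I_N * 'I_N | (ij.1 < ij.2)%N}.

Definition so_dim : nat := #|so_idx|.

Definition so_basis (a : 'I_so_dim) : 'M[K]_N :=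
  let ij := val (enum_val a) in delta_mx ij.1 ij.2 - delta_mx ij.2 ij.1.

Definition lie_bracket (x y : 'M[K]_N) : 'M[K]_N := x *m y - y *m x.

Definition B0 (x y : 'M[K]_N) : K := \tr (x *m y).

(* Gram matrix of B0 in the basis, and its inverse: the Casimir tensor is  *)
(* Omega = sum_a v_a (x) v^a = sum_{a,b} Ginv a b v_a (x) v_b.             *)
Definition so_gram : 'M[K]_so_dim := \matrix_(a, b) B0 (so_basis a) (so_basis b).
Definition so_gram_inv : 'M[K]_so_dim := invmx so_gram.

(* Universal weight system composed with St (x) St, on a single diagram,   *)
(* with End(K^N) (x) End(K^N) realized as 'M_(N*N) via the Kronecker       *)
(* product (an injective algebra map).  One sums over labellings of the     *)
(* half-edges by basis indices; each edge contributes the Casimir           *)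
(* coefficient, each trivalent vertex contributes -t evaluated on its three *)
(* half-edge vectors in cyclic order, i.e. -B0([x,y],z), and the univalent  *)
(* vertices contribute the product in U(so_N), mapped by St, along each     *)
(* strand in orientation order.                                             *)
Definition W_St (D : jdiag) : 'M[K]_(N * N) :=
  let s := jedge D in
  \sum_(l : {ffun half_edge (jn D) (jp D) (jq D) -> 'I_so_dim})
    ((\prod_(h : half_edge (jn D) (jp D) (jq D) | (enum_rank h < enum_rank (s h))%N) so_gram_inv (l h) (l (s h)))
     * (\prod_(i < jn D)
          - B0 (lie_bracket (so_basis (l (inl (i, 0)))) (so_basis (l (inl (i, 1)))))
               (so_basis (l (inl (i, 2))))))
    *: ((\big[mulmx/1%:M]_(j < jp D) so_basis (l (inr (inl j))))
        *t (\big[mulmx/1%:M]_(j < jq D) so_basis (l (inr (inr j))))).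

(* The image of W^St_{so_N} on A(↓↓)_K: the K-span of the values on        *)
(* diagrams (W factors through the relations AS, IHX, STU).                *)
Definition in_W_image (M : 'M[K]_(N * N)) : Prop :=
  exists (s : seq (K * jdiag)), M = \sum_(x <- s) x.1 *: W_St x.2.

End SoN.

(* Stacking
   diagrams multiplies their values and the empty diagram gives 1, so the image is a
   unital subalgebra.  Conjugation by a signed permutation matrix P sends each basis
   vector e_ij of so_N to +-e_kl and preserves the trace form and the bracket;
   relabelling the half-edges of D accordingly turns the state sum for W(D) into
   itself, the signs cancelling in pairs along the edges.  So every W(D) commutes with
   P (x) P.  A matrix on K^N (x) K^N with this symmetry is symmetric: flipping the sign
   of one basis vector kills every entry in which that index occurs an odd number of
   times, and the remaining entries are matched with their transposes by a
   transposition of indices.  Hence the image consists of symmetric matrices and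
   xy = (xy)^T = y^T x^T = yx. *)

From HB Require Import structures.
From mathcomp Require Import all_boot all_order all_algebra.
From mathcomp Require Import all_fingroup mxtens.
From mathcomp Require Import ring.
Set Implicit Arguments. Unset Strict Implicit. Unset Printing Implicit Defensive.
Import GRing.Theory.
Local Open Scope ring_scope.

Lemma prodmxZ (K : fieldType) (n m : nat) (c : 'I_m -> K) (F : 'I_m -> 'M[K]_n) :
  \prod_(j < m) (c j *: F j) = (\prod_(j < m) c j) *: \prod_(j < m) F j.
Proof.
elim: m c F => [|m IH] c F; first by rewrite !big_ord0 scale1r.
rewrite !big_ord_recr IH /=.
set P := \prod_(j < m) F _; set Q := \prod_(j < m) c _.
change (Q *: P *m (c ord_max *: F ord_max) = (Q * c ord_max) *: (P *m F ord_max)).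
by rewrite -scalemxAl -scalemxAr scalerA.
Qed.

Lemma tensmxZ (R : comPzRingType) m n p q (c d : R) (A : 'M[R]_(m, n)) (B : 'M[R]_(p, q)) :
  (c *: A) *t (d *: B) = (c * d) *: (A *t B).
Proof. by apply/matrixP => i j; rewrite !mxE mulrACA. Qed.

Lemma tensmx11 (R : comPzRingType) (n : nat) : (1%:M : 'M[R]_n) *t (1%:M : 'M[R]_n) = 1%:M.
Proof.
apply/matrixP => k k'; case: (mxtens_indexP k) => i1 i2; case: (mxtens_indexP k') => j1 j2.
rewrite tensmxE !mxE (inj_eq (can_inj (@mxtens_indexK n n))) xpair_eqE.
by case: (i1 == j1); case: (i2 == j2); rewrite ?mulr1 ?mulr0.
Qed.

Lemma big_involution (T : finType) (s : T -> T) :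
  involutive s -> (forall h, s h != h) ->
  forall (R : Type) (idx : R) (op : Monoid.com_law idx) (F : T -> R),
  \big[op/idx]_h F h =
  \big[op/idx]_(h | (enum_rank h < enum_rank (s h))%N) op (F h) (F (s h)).
Proof.
move=> sK s_nofix R idx op F; rewrite (bigID (fun h => (enum_rank h < enum_rank (s h))%N)) /=.
rewrite big_split /=; congr (op _ _); rewrite (reindex_inj (inv_inj sK)) /=.
apply: eq_bigl => h; rewrite sK -leqNgt leq_eqVlt; case: eqP => //= /ord_inj.
by move/enum_rank_inj=> e; have := s_nofix h; rewrite -e eqxx.
Qed.

Section SoBasis.
Variables (K : fieldType) (N : nat).

Lemma mxtrace_delta (i k : 'I_N) : \tr (delta_mx i k : 'M[K]_N) = (i == k)%:R.
Proof.
rewrite /mxtrace (bigD1 i) //= big1 ?addr0; first by rewrite mxE eqxx eq_sym.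
by move=> x /negbTE xi; rewrite mxE xi.
Qed.

Lemma so_basis_lt (a : 'I_(so_dim N)) : ((val (enum_val a)).1 < (val (enum_val a)).2)%N.
Proof. exact: (valP (enum_val a)). Qed.

Lemma lie_bracketZ (c d : K) (A B : 'M[K]_N) :
  lie_bracket (c *: A) (d *: B) = (c * d) *: lie_bracket A B.
Proof.
by rewrite /lie_bracket -!scalemxAl -!scalemxAr !scalerA scalerBr [d * c]mulrC.
Qed.

Lemma B0Z (c d : K) (A B : 'M[K]_N) : B0 (c *: A) (d *: B) = c * d * B0 A B.
Proof. by rewrite /B0 -scalemxAl -scalemxAr !mxtraceZ mulrA. Qed.

Lemma B0_so_basis (a b : 'I_(so_dim N)) :
  B0 (so_basis K a) (so_basis K b) = - 2%:R * (a == b)%:R.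
Proof.
have -> : (a == b) = (val (enum_val a) == val (enum_val b)).
  by rewrite (inj_eq val_inj) (inj_eq enum_val_inj).
rewrite /B0 /so_basis.
move: (so_basis_lt a) (so_basis_lt b).
move: (val (enum_val a)) (val (enum_val b)) => [i j] [k l] /= ij kl.
rewrite xpair_eqE mulmxBl !mulmxBr !mul_delta_mx_cond !raddfB /= !raddfMn /= !mxtrace_delta.
have [jk|] := eqVneq j k; have [il|] := eqVneq i l => //=.
  by move: kl; rewrite -jk -il ltnNge ltnW.
all: by move=> *; case: (i == k); case: (j == l) => /=; ring.
Qed.

Lemma so_gram_invE (a b : 'I_(so_dim N)) :
  so_gram_inv K N a b = (- 2%:R)^-1 * (a == b)%:R.
Proof.
have -> : so_gram_inv K N = invmx (- 2%:R)%:M.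
  by congr invmx; apply/matrixP => x y; rewrite !mxE B0_so_basis mulr_natr.
by rewrite invmx_scalar mxE mulr_natr.
Qed.

End SoBasis.

(** * Signed permutation symmetry *)

Section SignedConj.
Variables (K : fieldType) (n : nat) (sig : {perm 'I_n}) (eps : 'I_n -> K).
Hypothesis eps_sign : forall i, eps i * eps i = 1.

(* Conjugation P^T M P by the signed permutation matrix with P (sig x) x = eps x. *)
Definition sconj (M : 'M[K]_n) : 'M[K]_n :=
  \matrix_(x, y) (eps x * eps y * M (sig x) (sig y)).

Lemma sconjM A B : sconj (A *m B) = sconj A *m sconj B.
Proof.
apply/matrixP => x y; rewrite !mxE big_distrr /= (reindex_inj (@perm_inj _ sig)).
apply: eq_bigr => z _; rewrite !mxE.
by transitivity (eps x * eps y * (A (sig x) (sig z) * B (sig z) (sig y)) * (eps z * eps z));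
  [rewrite eps_sign mulr1 | ring].
Qed.

Lemma sconj1 : sconj 1%:M = 1%:M.
Proof.
apply/matrixP => x y; rewrite !mxE (inj_eq perm_inj).
by case: eqP => [->|_]; rewrite ?eps_sign ?mulr1 ?mulr0.
Qed.

Fact sconj_is_semilinear : semilinear sconj.
Proof.
by split=> [c A|A B]; apply/matrixP => x y; rewrite !mxE; [rewrite mulrCA | rewrite mulrDr].
Qed.
HB.instance Definition _ :=
  GRing.isSemilinear.Build K 'M[K]_n 'M[K]_n _ sconj sconj_is_semilinear.

Lemma mxtrace_sconj A : \tr (sconj A) = \tr A.
Proof.
rewrite /mxtrace [RHS](reindex_inj (@perm_inj _ sig)).
by apply: eq_bigr => x _; rewrite mxE eps_sign mul1r.
Qed.

Lemma sconj_prod m (F : 'I_m -> 'M[K]_n) :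
  sconj (\prod_(j < m) F j) = \prod_(j < m) sconj (F j).
Proof. exact: (big_morph sconj sconjM sconj1). Qed.

Lemma sconj_delta i j : sconj (delta_mx i j) =
  (eps ((sig^-1)%g i) * eps ((sig^-1)%g j)) *: delta_mx ((sig^-1)%g i) ((sig^-1)%g j).
Proof.
have sigV x k : (sig x == k) = (x == (sig^-1)%g k).
  by apply/eqP/eqP => [<-|->]; rewrite ?permK ?permKV.
apply/matrixP => x y; rewrite !mxE !sigV.
by case: (x =P _) => [->|_]; case: (y =P _) => [->|_]; rewrite ?andbF ?mulr0 ?mulr1.
Qed.

End SignedConj.

Section TensorSignedConj.
Variables (K : fieldType) (N : nat) (sig : {perm 'I_N}) (eps : 'I_N -> K).

Definition tens_perm_fun (k : 'I_(N * N)) : 'I_(N * N) :=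
  mxtens_index (sig (mxtens_unindex k).1, sig (mxtens_unindex k).2).

Lemma tens_perm_fun_inj : injective tens_perm_fun.
Proof.
move=> k k' /(can_inj (@mxtens_indexK _ _))/eqP.
rewrite xpair_eqE !(inj_eq perm_inj) -xpair_eqE -!surjective_pairing => /eqP.
exact: (can_inj (@mxtens_unindexK N N)).
Qed.

Definition tens_perm : {perm 'I_(N * N)} := perm tens_perm_fun_inj.

Definition tens_sign (k : 'I_(N * N)) : K :=
  eps (mxtens_unindex k).1 * eps (mxtens_unindex k).2.

Lemma sconj_tens (A B : 'M[K]_N) :
  sconj tens_perm tens_sign (A *t B) = sconj sig eps A *t sconj sig eps B.
Proof.
apply/matrixP => k k'.
by rewrite !mxE !permE /tens_perm_fun /tens_sign !mxtens_indexK /=; ring.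
Qed.

Lemma sconj_tens_index (M : 'M[K]_(N * N)) i1 i2 j1 j2 :
  sconj tens_perm tens_sign M (mxtens_index (i1, i2)) (mxtens_index (j1, j2)) =
  eps i1 * eps i2 * (eps j1 * eps j2) *
  M (mxtens_index (sig i1, sig i2)) (mxtens_index (sig j1, sig j2)).
Proof. by rewrite mxE !permE /tens_sign /tens_perm_fun !mxtens_indexK. Qed.

End TensorSignedConj.

Section SoSignedConj.
Variables (K : fieldType) (N : nat) (sig : {perm 'I_N}) (eps : 'I_N -> K).
Hypothesis eps_sign : forall i, eps i * eps i = 1.
Notation sconj := (sconj sig eps).

Lemma B0_sconj A B : B0 (sconj A) (sconj B) = B0 A B.
Proof. by rewrite /B0 -sconjM // mxtrace_sconj. Qed.

Lemma lie_bracket_sconj A B : lie_bracket (sconj A) (sconj B) = sconj (lie_bracket A B).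
Proof. by rewrite /lie_bracket linearB /= !sconjM. Qed.

(* sconj e_ij = +-e_(sig^-1 i, sig^-1 j): so_relabel sorts this pair back into a
   basis index and so_sign records the sign. *)
Definition so_pre (a : 'I_(so_dim N)) : 'I_N * 'I_N :=
  ((sig^-1)%g (val (enum_val a)).1, (sig^-1)%g (val (enum_val a)).2).

Definition so_sorted_pre a : 'I_N * 'I_N :=
  if ((so_pre a).1 < (so_pre a).2)%N then so_pre a else ((so_pre a).2, (so_pre a).1).

Lemma so_sorted_pre_lt a : ((so_sorted_pre a).1 < (so_sorted_pre a).2)%N.
Proof.
have : (so_pre a).1 != (so_pre a).2.
  by rewrite (inj_eq perm_inj); apply: contraTneq (so_basis_lt a) => ->; rewrite ltnn.
rewrite /so_sorted_pre; case: (so_pre a) => i j /= ij.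
by case: (ltngtP i j) => // /ord_inj e; rewrite e eqxx in ij.
Qed.

Definition so_relabel a : 'I_(so_dim N) :=
  enum_rank (insubd (enum_val a) (so_sorted_pre a) : so_idx N).

Definition so_sign a : K :=
  eps (so_pre a).1 * eps (so_pre a).2 * (if ((so_pre a).1 < (so_pre a).2)%N then 1 else -1).

Lemma so_basis_relabel a : so_basis K (so_relabel a) =
  delta_mx (so_sorted_pre a).1 (so_sorted_pre a).2 -
  delta_mx (so_sorted_pre a).2 (so_sorted_pre a).1.
Proof. by rewrite /so_basis /so_relabel enum_rankK insubdK //; exact: so_sorted_pre_lt. Qed.

Lemma sconj_so_basis a : sconj (so_basis K a) = so_sign a *: so_basis K (so_relabel a).
Proof.
rewrite so_basis_relabel {1}/so_basis linearB /= !sconj_delta.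
rewrite /so_sign /so_sorted_pre /so_pre /=.
move: ((sig^-1)%g _) ((sig^-1)%g _) => i j.
case: ltnP => _ /=; rewrite ?mulr1 ?scalerBr [eps j * _]mulrC //.
by rewrite mulrN1 !scaleNr opprK addrC.
Qed.

Lemma so_sign_sqr a : so_sign a * so_sign a = 1.
Proof.
rewrite /so_sign; move: (so_pre a) => [i j] /=.
have : (if (i < j)%N then 1 else -1 : K) ^+ 2 = 1 by case: ifP; rewrite ?sqrrN expr1n.
move: (if _ then _ else _) => s s2.
by transitivity ((eps i * eps i) * (eps j * eps j) * s ^+ 2);
  [ring | rewrite !eps_sign s2 !mulr1].
Qed.

Lemma so_relabel_inj : (2%:R : K) != 0 -> injective so_relabel.
Proof.
move=> two_neq0 a b e.
have sign_neq0 c : so_sign c != 0.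
  by apply/eqP => sc0; have := so_sign_sqr c; rewrite sc0 mul0r => /esym/eqP; rewrite oner_eq0.
have : B0 (so_basis K a) (so_basis K b) != 0.
  rewrite -B0_sconj !sconj_so_basis e B0Z.
  by rewrite B0_so_basis eqxx mulr1 mulf_neq0 1?mulf_neq0 ?sign_neq0 ?oppr_eq0.
by rewrite B0_so_basis; case: (a =P b) => // _; rewrite mulr0 eqxx.
Qed.

Lemma sconj_prod_so_basis m (a : 'I_m -> 'I_(so_dim N)) :
  sconj (\prod_(j < m) so_basis K (a j)) =
  (\prod_(j < m) so_sign (a j)) *: \prod_(j < m) so_basis K (so_relabel (a j)).
Proof.
rewrite sconj_prod // -prodmxZ; apply: eq_bigr => j _; exact: sconj_so_basis.
Qed.

End SoSignedConj.

(** * State sums over labellings of Jacobi diagrams *)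

Notation half_edges D := (half_edge (jn D) (jp D) (jq D)).

Lemma jedgeK (D : jdiag) : involutive (jedge D).
Proof. by move=> h; have /forallP/(_ h)/andP[/eqP -> _] := jedge_ok D. Qed.

Lemma jedge_neq (D : jdiag) h : jedge D h != h.
Proof. by have /forallP/(_ h)/andP[_ ->] := jedge_ok D. Qed.

Definition npairs (D : jdiag) : nat :=
  #|[pred h : half_edges D | (enum_rank h < enum_rank (jedge D h))%N]|.

Lemma double_npairs D : (npairs D).*2 = #|half_edges D|.
Proof.
rewrite -sum1_card (big_involution (@jedgeK D) (@jedge_neq D) addn) /=.
by rewrite sum_nat_const -muln2.
Qed.

Section Weights.
Variables (K : fieldType) (N : nat) (D : jdiag).
Notation labelling := {ffun half_edges D -> 'I_(so_dim N)}.

Definition edge_weight (l : labelling) : K :=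
  \prod_(h | (enum_rank h < enum_rank (jedge D h))%N) so_gram_inv K N (l h) (l (jedge D h)).

Definition vertex_weight (l : labelling) : K :=
  \prod_(i < jn D)
     - B0 (lie_bracket (so_basis K (l (inl (i, 0)))) (so_basis K (l (inl (i, 1)))))
          (so_basis K (l (inl (i, 2)))).

Definition strand1 (l : labelling) : 'M[K]_N := \prod_(j < jp D) so_basis K (l (inr (inl j))).
Definition strand2 (l : labelling) : 'M[K]_N := \prod_(j < jq D) so_basis K (l (inr (inr j))).

Lemma W_StE : W_St K N D =
  \sum_(l : labelling) (edge_weight l * vertex_weight l) *: (strand1 l *t strand2 l).
Proof. by []. Qed.

Lemma edge_weight_sign (l : labelling) (f : 'I_(so_dim N) -> K) :
  (forall a, f a * f a = 1) -> edge_weight l * \prod_h f (l h) = edge_weight l.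
Proof.
move=> f_sign; rewrite (big_involution (@jedgeK D) (@jedge_neq D)) -big_split /=.
apply: eq_bigr => h _; rewrite so_gram_invE.
by case: eqP => [->|_]; rewrite ?f_sign ?mulr1 // !mulr0 mul0r.
Qed.

(* Unlike the definition, this form does not depend on which half-edge represents each
   edge, which makes it compatible with stacking. *)
Lemma edge_weightE (l : labelling) : edge_weight l =
  (- 2%:R)^-1 ^+ npairs D * \prod_h ((l h == l (jedge D h))%:R : K).
Proof.
rewrite /edge_weight (eq_bigr _ (fun h _ => so_gram_invE _ _ _)) big_split /= prodr_const.
congr (_ * _); rewrite [RHS](big_involution (@jedgeK D) (@jedge_neq D)).
apply: eq_bigr => h _; rewrite jedgeK [l h == _]eq_sym.
by case: (_ == _); rewrite /= ?mulr1 ?mulr0.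
Qed.

End Weights.

Section Invariance.
Variables (K : fieldType) (N : nat) (sig : {perm 'I_N}) (eps : 'I_N -> K).
Hypotheses (eps_sign : forall i, eps i * eps i = 1) (two_neq0 : (2%:R : K) != 0).
Variable D : jdiag.
Notation labelling := {ffun half_edges D -> 'I_(so_dim N)}.
Notation sign := (so_sign sig eps).

Definition relabel (l : labelling) : labelling := [ffun h => so_relabel sig (l h)].

Lemma relabel_inj : injective relabel.
Proof.
move=> l1 l2 /ffunP e; apply/ffunP => h.
by have := e h; rewrite !ffunE => /(so_relabel_inj eps_sign two_neq0).
Qed.

Lemma edge_weight_relabel l : edge_weight K (relabel l) = edge_weight K l.
Proof.
apply: eq_bigr => h _.
by rewrite !so_gram_invE !ffunE (inj_eq (so_relabel_inj eps_sign two_neq0)).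
Qed.

Lemma vertex_weight_relabel l : vertex_weight K l =
  (\prod_(h : 'I_(jn D) * 'I_3) sign (l (inl h))) * vertex_weight K (relabel l).
Proof.
have -> : \prod_(h : 'I_(jn D) * 'I_3) sign (l (inl h)) =
    \prod_(i < jn D) \prod_(k < 3) sign (l (inl (i, k))).
  by rewrite pair_bigA; apply: eq_bigr => -[i k].
rewrite /vertex_weight -big_split /=; apply: eq_bigr => i _.
rewrite !big_ord_recl big_ord0 mulr1 !ffunE.
rewrite -(B0_sconj sig eps_sign) -(lie_bracket_sconj sig eps_sign) !sconj_so_basis.
have -> : lift ord0 (lift ord0 ord0) = 2 :> 'I_3 by apply: val_inj.
have -> : lift ord0 ord0 = 1 :> 'I_3 by apply: val_inj.
by rewrite lie_bracketZ B0Z mulrN !mulrA.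
Qed.

Lemma sconj_W_St :
  sconj (tens_perm sig) (tens_sign eps) (W_St K N D) = W_St K N D.
Proof.
rewrite !W_StE linear_sum [RHS](reindex_inj relabel_inj) /=.
apply: eq_bigr => l _; rewrite linearZ /= sconj_tens /strand1 /strand2.
rewrite !(sconj_prod_so_basis sig eps_sign) tensmxZ scalerA; congr (_ *: (_ *t _)); last first.
- by apply: eq_bigr => j _; rewrite ffunE.
- by apply: eq_bigr => j _; rewrite ffunE.
rewrite edge_weight_relabel (vertex_weight_relabel l).
rewrite -[in RHS](edge_weight_sign l (so_sign_sqr sig eps_sign)) !big_sumType /=.
ring.
Qed.

End Invariance.

Ltac case_eqs :=
  repeat match goal with n : is_true (?a != ?b) |- _ =>
    rewrite ?(negbTE n); rewrite eq_sym in n; rewrite ?(negbTE n); clear n end;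
  rewrite ?eqxx; repeat match goal with |- context [?a == ?b] => case: (a == b) end.

Lemma odd_count_or_pairing (T : eqType) (x1 x2 x3 x4 : T) (s := [:: x1; x2; x3; x4]) :
  [|| (x1 == x3) && (x2 == x4), (x1 == x4) && (x2 == x3), (x1 == x2) && (x3 == x4),
      odd (count_mem x1 s), odd (count_mem x2 s), odd (count_mem x3 s)
    | odd (count_mem x4 s)].
Proof.
rewrite /s /=.
have [<-|n12] := eqVneq x1 x2; first by have [<-|n34] := eqVneq x3 x4; case_eqs.
have [<-|n13] := eqVneq x1 x3; first by have [<-|n24] := eqVneq x2 x4; case_eqs.
have [<-|n14] := eqVneq x1 x4; first by have [<-|n23] := eqVneq x2 x3; case_eqs.
by case_eqs.
Qed.

Section TensInvariant.
Variables (K : fieldType) (N : nat).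
Hypothesis two_neq0 : (2%:R : K) != 0.

Definition tens_invariant (M : 'M[K]_(N * N)) : Prop :=
  forall (sig : {perm 'I_N}) (eps : 'I_N -> K), (forall i, eps i * eps i = 1) ->
  sconj (tens_perm sig) (tens_sign eps) M = M.

Variable M : 'M[K]_(N * N).
Hypothesis M_inv : tens_invariant M.
Notation entry i1 i2 j1 j2 := (M (mxtens_index (i1, i2)) (mxtens_index (j1, j2))).

Lemma tens_invariant_entry (sig : {perm 'I_N}) (eps : 'I_N -> K) :
  (forall i, eps i * eps i = 1) ->
  forall i1 i2 j1 j2, entry i1 i2 j1 j2 =
  eps i1 * eps i2 * (eps j1 * eps j2) * entry (sig i1) (sig i2) (sig j1) (sig j2).
Proof. by move=> eps_sign i1 i2 j1 j2; rewrite -{1}(M_inv sig eps_sign) sconj_tens_index. Qed.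

Lemma tens_invariant_odd_count k i1 i2 j1 j2 :
  odd (count_mem k [:: i1; i2; j1; j2]) -> entry i1 i2 j1 j2 = 0.
Proof.
pose flip x : K := (-1) ^+ (x == k).
have flip_sign x : flip x * flip x = 1 by rewrite -signr_addb addbb.
move=> odd_k; have := tens_invariant_entry 1%g flip_sign i1 i2 j1 j2.
rewrite !perm1 /flip -!exprD -signr_odd.
have -> : ((i1 == k) + (i2 == k) + ((j1 == k) + (j2 == k)))%N =
          count_mem k [:: i1; i2; j1; j2] by rewrite /= addn0 !addnA.
rewrite odd_k expr1 mulN1r => /eqP; rewrite -subr_eq0 opprK -mulr2n -mulr_natl.
by rewrite mulf_eq0 (negbTE two_neq0) => /eqP.
Qed.

Lemma tens_invariant_sym : M^T = M.
Proof.
apply/matrixP => k k'; rewrite mxE.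
case: (mxtens_indexP k) => i1 i2; case: (mxtens_indexP k') => j1 j2.
have odd_count_entries x : odd (count_mem x [:: i1; i2; j1; j2]) ->
    entry i1 i2 j1 j2 = 0 /\ entry j1 j2 i1 i2 = 0.
  move=> odd_x; split; first exact: tens_invariant_odd_count odd_x.
  apply: (tens_invariant_odd_count (k := x)).
  have -> : count_mem x [:: j1; j2; i1; i2] = count_mem x [:: i1; i2; j1; j2].
    by rewrite /=; ring.
  exact: odd_x.
have unit_sign (i : 'I_N) : (fun=> 1 : K) i * (fun=> 1 : K) i = 1 by rewrite mulr1.
have relabel_entry (sig : {perm 'I_N}) a b c d a' b' c' d' :
    sig a = a' -> sig b = b' -> sig c = c' -> sig d = d' -> entry a b c d = entry a' b' c' d'.
  by move=> <- <- <- <-; rewrite (tens_invariant_entry sig unit_sign) !mul1r.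
case/or4P: (odd_count_or_pairing i1 i2 j1 j2) => [/andP[/eqP <- /eqP <-] //||| odd_count].
- case/andP=> /eqP <- /eqP <-.
  by apply: (relabel_entry (tperm i1 i2)); rewrite ?tpermL ?tpermR.
- case/andP=> /eqP <- /eqP <-.
  by apply: (relabel_entry (tperm i1 j1)); rewrite ?tpermL ?tpermR.
by case/or4P: odd_count => /odd_count_entries[-> ->].
Qed.

End TensInvariant.

(** * Stacking diagrams *)

Section Stack.
Variables D1 D2 : jdiag.
Notation TS := (half_edge (jn D1 + jn D2) (jp D1 + jp D2) (jq D1 + jq D2)).

Definition stack_he (x : half_edges D1 + half_edges D2) : TS :=
  match x with
  | inl (inl (i, k)) => inl (lshift _ i, k)
  | inl (inr (inl j)) => inr (inl (lshift _ j))
  | inl (inr (inr j)) => inr (inr (lshift _ j))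
  | inr (inl (i, k)) => inl (rshift _ i, k)
  | inr (inr (inl j)) => inr (inl (rshift _ j))
  | inr (inr (inr j)) => inr (inr (rshift _ j))
  end.

Definition unstack_he (h : TS) : half_edges D1 + half_edges D2 :=
  match h with
  | inl (i, k) =>
      match split i with inl i1 => inl (inl (i1, k)) | inr i2 => inr (inl (i2, k)) end
  | inr (inl j) =>
      match split j with inl j1 => inl (inr (inl j1)) | inr j2 => inr (inr (inl j2)) end
  | inr (inr j) =>
      match split j with inl j1 => inl (inr (inr j1)) | inr j2 => inr (inr (inr j2)) end
  end.

Lemma stack_heK : cancel stack_he unstack_he.
Proof.
have splitL n m (i : 'I_n) : split (lshift m i) = inl i.
  by rewrite -[lshift m i]/(unsplit (inl i)) unsplitK.
have splitR n m (i : 'I_m) : split (rshift n i) = inr i.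
  by rewrite -[rshift n i]/(unsplit (inr i)) unsplitK.
by case=> [[[i k]|[j|j]]|[[i k]|[j|j]]] /=; rewrite ?splitL ?splitR.
Qed.

Lemma unstack_heK : cancel unstack_he stack_he.
Proof.
case=> [[i k]|[j|j]] /=;
  [rewrite -[i in RHS]splitK | rewrite -[j in RHS]splitK | rewrite -[j in RHS]splitK];
  by case: (split _).
Qed.

Lemma stack_he_bij : bijective stack_he.
Proof. exact: Bijective stack_heK unstack_heK. Qed.

Definition sum_jedge (x : half_edges D1 + half_edges D2) : half_edges D1 + half_edges D2 :=
  match x with inl h1 => inl (jedge D1 h1) | inr h2 => inr (jedge D2 h2) end.

Definition stack_jedge_fun (h : TS) : TS := stack_he (sum_jedge (unstack_he h)).

Lemma stack_jedge_funK : involutive stack_jedge_fun.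
Proof.
move=> h; rewrite /stack_jedge_fun stack_heK.
have -> : sum_jedge (sum_jedge (unstack_he h)) = unstack_he h.
  by case: (unstack_he h) => x /=; rewrite jedgeK.
by rewrite unstack_heK.
Qed.

Lemma stack_jedge_fun_neq h : stack_jedge_fun h != h.
Proof.
apply/eqP => e; have : sum_jedge (unstack_he h) = unstack_he h.
  by rewrite -{2}e /stack_jedge_fun stack_heK.
by case: (unstack_he h) => x /= [] /eqP; rewrite (negbTE (jedge_neq _)).
Qed.

Definition stack_jedge : {perm TS} := perm (inv_inj stack_jedge_funK).

Lemma stack_jedge_ok : [forall h, (stack_jedge (stack_jedge h) == h) && (stack_jedge h != h)].
Proof.
by apply/forallP => h; rewrite !permE stack_jedge_funK eqxx stack_jedge_fun_neq.
Qed.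

Definition stack : jdiag := JDiag stack_jedge_ok.

Lemma jedge_stack x : jedge stack (stack_he x) = stack_he (sum_jedge x).
Proof. by rewrite /= permE /stack_jedge_fun stack_heK. Qed.

Lemma npairs_stack : npairs stack = (npairs D1 + npairs D2)%N.
Proof.
apply: double_inj; rewrite doubleD !double_npairs.
by rewrite -(bij_eq_card stack_he_bij) card_sum.
Qed.

End Stack.

Section StackWeights.
Variables (K : fieldType) (N : nat) (D1 D2 : jdiag).
Notation labelling D := {ffun half_edges D -> 'I_(so_dim N)}.

Definition merge_labelling (p : labelling D1 * labelling D2) : labelling (stack D1 D2) :=
  [ffun h => match unstack_he h with inl h1 => p.1 h1 | inr h2 => p.2 h2 end].

Lemma merge_labelling_stack p x : merge_labelling p (stack_he x) =
  match x with inl h1 => p.1 h1 | inr h2 => p.2 h2 end.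
Proof. by rewrite ffunE stack_heK. Qed.

Lemma merge_labelling_bij : bijective merge_labelling.
Proof.
exists (fun l : labelling (stack D1 D2) =>
  ([ffun h1 => l (stack_he (inl h1))], [ffun h2 => l (stack_he (inr h2))])).
  by case=> l1 l2; congr pair; apply/ffunP => h; rewrite !ffunE stack_heK.
move=> l; apply/ffunP => h; rewrite ffunE -[in RHS](unstack_heK h).
by case: (unstack_he h) => x; rewrite ffunE.
Qed.

Lemma strand1_stack p :
  strand1 K (merge_labelling p) = strand1 K p.1 *m strand1 K p.2.
Proof.
rewrite /strand1 /= big_split_ord; congr (_ * _); apply: eq_bigr => j _.
  congr (so_basis K _); exact: (merge_labelling_stack p (inl (inr (inl j)))).
congr (so_basis K _); exact: (merge_labelling_stack p (inr (inr (inl j)))).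
Qed.

Lemma strand2_stack p :
  strand2 K (merge_labelling p) = strand2 K p.1 *m strand2 K p.2.
Proof.
rewrite /strand2 /= big_split_ord; congr (_ * _); apply: eq_bigr => j _.
  congr (so_basis K _); exact: (merge_labelling_stack p (inl (inr (inr j)))).
congr (so_basis K _); exact: (merge_labelling_stack p (inr (inr (inr j)))).
Qed.

Lemma vertex_weight_stack p :
  vertex_weight K (merge_labelling p) = vertex_weight K p.1 * vertex_weight K p.2.
Proof.
rewrite /vertex_weight /= big_split_ord; congr (_ * _); apply: eq_bigr => i _.
  by rewrite -![inl (lshift _ i, _)]/(stack_he (inl (inl (i, _)))) !merge_labelling_stack.
by rewrite -![inl (rshift _ i, _)]/(stack_he (inr (inl (i, _)))) !merge_labelling_stack.
Qed.

Lemma edge_weight_stack p :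
  edge_weight K (merge_labelling p) = edge_weight K p.1 * edge_weight K p.2.
Proof.
rewrite !edge_weightE npairs_stack exprD (reindex _ (onW_bij _ (stack_he_bij D1 D2))).
under eq_bigr do rewrite jedge_stack !merge_labelling_stack.
by rewrite big_sumType /= mulrACA.
Qed.

Lemma W_St_stack : W_St K N (stack D1 D2) = W_St K N D1 *m W_St K N D2.
Proof.
rewrite !W_StE (reindex _ (onW_bij _ merge_labelling_bij)) /= mulmx_suml.
under [RHS]eq_bigr do rewrite mulmx_sumr.
rewrite pair_bigA; apply: eq_bigr => -[l1 l2] _.
rewrite strand1_stack strand2_stack edge_weight_stack vertex_weight_stack /=.
by rewrite -scalemxAl -scalemxAr scalerA tensmx_mul mulrACA.
Qed.

End StackWeights.

Definition jdiag0_edge : {perm half_edge 0 0 0} := 1%g.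

Lemma jdiag0_ok : [forall h, (jdiag0_edge (jdiag0_edge h) == h) && (jdiag0_edge h != h)].
Proof. by apply/forallP => -[[[]]|[[]|[]]]. Qed.

Definition jdiag0 : jdiag := JDiag jdiag0_ok.

Lemma W_St_jdiag0 (K : fieldType) (N : nat) : W_St K N jdiag0 = 1%:M.
Proof.
have l0 : {ffun half_edge 0 0 0 -> 'I_(so_dim N)} by apply: finfun => -[[[]]|[[]|[]]].
rewrite W_StE (big_pred1 l0) => [|l]; last first.
  by apply/esym/eqP/ffunP => -[[[]]|[[]|[]]].
rewrite /edge_weight /vertex_weight /strand1 /strand2 /= !big_ord0 tensmx11.
by rewrite big1 ?mulr1 ?scale1r // => -[[[]]|[[]|[]]].
Qed.

Lemma in_W_image1 (K : fieldType) (N : nat) : in_W_image (1%:M : 'M[K]_(N * N)).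
Proof. by exists [:: (1, jdiag0)]; rewrite big_seq1 /= W_St_jdiag0 scale1r. Qed.

Lemma in_W_imageM (K : fieldType) (N : nat) (x y : 'M[K]_(N * N)) :
  in_W_image x -> in_W_image y -> in_W_image (x *m y).
Proof.
move=> [s ->] [t ->]; exists [seq (u.1 * v.1, stack u.2 v.2) | u <- s, v <- t].
rewrite big_allpairs_dep /= mulmx_suml; apply: eq_bigr => u _.
rewrite mulmx_sumr; apply: eq_bigr => v _ /=.
by rewrite W_St_stack -scalemxAl -scalemxAr scalerA.
Qed.

Lemma trmx_in_W_image (K : fieldType) (N : nat) (x : 'M[K]_(N * N)) :
  (2%:R : K) != 0 -> in_W_image x -> x^T = x.
Proof.
move=> two_neq0 [s ->]; rewrite linear_sum; apply: eq_bigr => -[c D] _ /=.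
by rewrite linearZ /= tens_invariant_sym // => sig eps eps_sign; exact: sconj_W_St.
Qed.

Theorem corollary5p8 (K : fieldType) (N : nat) :
  [pchar K] =i pred0 -> (2 <= N)%N ->
  [/\ @in_W_image K N 1%:M,
      (forall x y, @in_W_image K N x -> @in_W_image K N y ->
                   @in_W_image K N (x *m y)) &
      (forall x y, @in_W_image K N x -> @in_W_image K N y ->
                   x *m y = y *m x)].
Proof.
move=> char0 _; have two_neq0 : (2%:R : K) != 0 by rewrite (pcharf0P K).1.
split; [exact: in_W_image1 | exact: in_W_imageM |] => x y x_in y_in.
rewrite -(trmx_in_W_image two_neq0 (in_W_imageM x_in y_in)) trmx_mul.
by rewrite (trmx_in_W_image two_neq0 x_in) (trmx_in_W_image two_neq0 y_in).
Qed.
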